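(* Let $\mathcal{M}$ be a causal MDP and run C-UCBVI with confidence parameter $\delta>0$, both as described in the context. Let $\mathcal{E}$ be the event that $V_{k,h}(s)\ge V_h^*(s)$ for all episodes $k$, all steps $h\in[H]$ and all states $s\in\mathcal{S}$. Then $\Pr(\mathcal{E})\ge1-\delta$.
   Context: Causal MDP: finite state set $\mathcal{S}$ ($|\mathcal{S}|=S$), action set $\mathcal{A}$ (interventions), finite set $\mathcal{Z}$ ($|\mathcal{Z}|=Z$) of possible values of the parent variables. Unknown transitions $\mathbb{P}(s'\mid s,\mathbf{z})$, known conditional distributions $P(\mathbf{z}\mid s,a)$, known rewards $R(s,\mathbf{z})\in[0,1]$; $\mathbb{P}(s'\mid s,a)=\sum_{\mathbf{z}}\mathbb{P}(s'\mid s,\mathbf{z})P(\mathbf{z}\mid s,a)$, $R(s,a)=\sum_{\mathbf{z}}R(s,\mathbf{z})P(\mathbf{z}\mid s,a)$. Episodic interaction with horizon $H$, $K$ episodes, $T=KH$: in episode $k$ the initial state $s_{k,1}$ is arbitrary; at step $h$ the agent observes $s_{k,h}$, picks $a_{k,h}$, observes $\mathbf{z}_{k,h}\sim P(\cdot\mid s_{k,h},a_{k,h})$, and $s_{k,h+1}\sim\mathbb{P}(\cdot\mid s_{k,h},\mathbf{z}_{k,h})$. For a policy $\pi:\mathcal{S}\times[H]\to\mathcal{A}$, $V_h^\pi(s)=\mathbb{E}[\sum_{h'=h}^H R(s_{h'},\pi(s_{h'},h'))\mid s_h=s]$ and $V_h^*(s)=\sup_\pi V_h^\pi(s)$. C-UCBVI: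 before episode $k$, from all earlier tuples $(s,a,\mathbf{z},s')$, let $N_k(s,\mathbf{z},y)$ count tuples with state $s$, parent value $\mathbf{z}$, next state $y$; $N_k(s,\mathbf{z})=\sum_yN_k(s,\mathbf{z},y)$; $\hat{\mathbb{P}}_k(y\mid s,\mathbf{z})=N_k(s,\mathbf{z},y)/N_k(s,\mathbf{z})$ if $N_k(s,\mathbf{z})>0$. With $L=\log(5SHKZT/\delta)$, $b_{k,h}(s,\mathbf{z})=7HL\sqrt{S/N_k(s,\mathbf{z})}$. Set $V_{k,H+1}\equiv0$; for $h=H,\dots,1$: $q_{k,h}(s,\mathbf{z})=\min\{H,R(s,\mathbf{z})+\sum_y\hat{\mathbb{P}}_k(y\mid s,\mathbf{z})V_{k,h+1}(y)+b_{k,h}(s,\mathbf{z})\}$ if $N_k(s,\mathbf{z})>0$, else $H$; $Q_{k,h}(s,a)=\sum_{\mathbf{z}}P(\mathbf{z}\mid s,a)q_{k,h}(s,\mathbf{z})$; $V_{k,h}(s)=\max_aQ_{k,h}(s,a)$. The agent plays $a_{k,h}=\arg\max_aQ_{k,h}(s_{k,h},a)$. *)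

From mathcomp Require Import all_boot all_order all_algebra.
From mathcomp Require Import classical_sets reals exp.
Set Implicit Arguments. Unset Strict Implicit. Unset Printing Implicit Defensive.
Import Order.TTheory GRing.Theory Num.Theory.
Local Open Scope ring_scope.
Local Open Scope classical_set_scope.

(* A causal MDP: unknown transitions P(s'|s,z), known P(z|s,a), known R(s,z). *)
Record cmdp (R : realType) (S A Z : finType) := CMDP {
  trans : S -> Z -> S -> R;
  pz    : S -> A -> Z -> R;
  rew   : S -> Z -> R
}.

Definition valid_cmdp (R : realType) (S A Z : finType) (M : cmdp R S A Z) : Prop :=
  [/\ (forall s z s', 0 <= trans M s z s'),
      (forall s z, \sum_(s' : S) trans M s z s' = 1),
      (forall s a z, 0 <= pz M s a z),
      (forall s a, \sum_(z : Z) pz M s a z = 1) &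
      (forall s z, 0 <= rew M s z <= 1)].

Section CausalMDP.
Variables (R : realType) (S A Z : finType) (M : cmdp R S A Z) (H K : nat).

Definition Psa (s : S) (a : A) (s' : S) : R :=
  \sum_(z : Z) trans M s z s' * pz M s a z.
Definition Rsa (s : S) (a : A) : R := \sum_(z : Z) rew M s z * pz M s a z.

(* V^pi, indexed by the number m of remaining steps: V^pi_h = Vpi pi (H+1-h).
   At remaining m+1 the current step is h = H - m. Policies pi : S -> nat -> A
   (pi s h = action at state s, step h). *)
Fixpoint Vpi (pi : S -> nat -> A) (m : nat) (s : S) : R :=
  match m with
  | 0 => 0
  | m'.+1 => Rsa s (pi s (H - m')%N) +
             \sum_(s' : S) Psa s (pi s (H - m')%N) s' * Vpi pi m' s'
  end.

Definition Vpi_h (pi : S -> nat -> A) (h : nat) (s : S) : R := Vpi pi (H.+1 - h) s.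

Definition Vstar (h : nat) (s : S) : R := sup (range (fun pi => Vpi_h pi h s)).

Definition tup := (S * A * Z * S)%type.

Definition N3 (D : seq tup) (s : S) (z : Z) (y : S) : nat :=
  count (fun x : tup => [&& x.1.1.1 == s, x.1.2 == z & x.2 == y]) D.
Definition N2 (D : seq tup) (s : S) (z : Z) : nat := (\sum_(y : S) N3 D s z y)%N.
Definition Phat (D : seq tup) (y : S) (s : S) (z : Z) : R :=
  (N3 D s z y)%:R / (N2 D s z)%:R.

Variable delta : R.
Definition Tn : nat := (K * H)%N.
Definition Lconf : R := ln ((5 * #|S| * H * K * #|Z| * Tn)%N%:R / delta).
Definition bonus (D : seq tup) (s : S) (z : Z) : R :=
  7 * H%:R * Lconf * Num.sqrt (#|S|%:R / (N2 D s z)%:R).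

(* q_{k,h}, Q_{k,h} given the next-step value function Vn = V_{k,h+1} *)
Definition qhat (D : seq tup) (Vn : S -> R) (s : S) (z : Z) : R :=
  if (0 < N2 D s z)%N then
    Num.min H%:R (rew M s z + \sum_(y : S) Phat D y s z * Vn y + bonus D s z)
  else H%:R.
Definition Qof (D : seq tup) (Vn : S -> R) (s : S) (a : A) : R :=
  \sum_(z : Z) pz M s a z * qhat D Vn s z.

(* Optimistic value, by number of remaining steps: V_{k,h} = Vrem D (H+1-h). *)
Fixpoint Vrem (D : seq tup) (m : nat) (s : S) : R :=
  match m with
  | 0 => 0
  | m'.+1 => sup (range (Qof D (Vrem D m') s))
  end.
Definition Vhat (D : seq tup) (h : nat) (s : S) : R := Vrem D (H.+1 - h) s.
Definition Qhat (D : seq tup) (h : nat) (s : S) (a : A) : R :=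
  Qof D (Vhat D h.+1) s a.

(* Interaction protocol. [init D] chooses the (arbitrary, possibly adaptive)
   initial state of an episode from the data so far; [tb] breaks ties in argmax.
   State: (data so far, current next-state, probability weight). *)
Variables (init : seq tup -> S) (tb : (A -> R) -> A).

Definition step (st : seq tup * S * R) (o : Z * S) : seq tup * S * R :=
  let: (D, cur, w) := st in
  let n := size D in
  let k := (n %/ H)%N in                 (* episode index, 0-based *)
  let h := (n %% H).+1 in                (* step index in 1..H *)
  let s := if (n %% H == 0)%N then init D else cur in
  let Dk := take (k * H) D in            (* data from earlier episodes *)
  let a := tb (Qhat Dk h s) in
  let: (z, s') := o in
  (rcons D (s, a, z, s'), s', w * pz M s a z * trans M s z s').

Definition run (om : seq (Z * S)) : seq tup * S * R :=
  foldl step ([::], init [::], 1) om.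

Definition eventE (D : seq tup) : bool :=
  [forall k : 'I_K, [forall h : 'I_H, [forall s : S,
     Vstar h.+1 s <= Vhat (take (k * H) D) h.+1 s]]].

(* Pr(E): sum, over all sequences of the T = KH outcomes (z_t, s'_t), of the
   probability of the sequence (product of the conditional probabilities)
   times the indicator of E. *)
Definition probE : R :=
  \sum_(om : (Tn).-tuple (Z * S))
     let: (D, _, w) := run om in w * (eventE D)%:R.

End CausalMDP.

From mathcomp Require Import all_boot all_order all_algebra.
From mathcomp Require Import classical_sets reals sequences exp.
From mathcomp Require Import ring lra zify.
Import Order.TTheory GRing.Theory Num.Theory.
Local Open Scope ring_scope.
Set Implicit Arguments. Unset Strict Implicit. Unset Printing Implicit Defensive.

(* Optimism holds by backward induction on the number of steps to go as soon as,
   for every pair (s, z), every number N of visits to it and every m < H, the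
   empirical backup of the optimal value V*_m over the first N next states seen
   from (s, z) underestimates the true backup P V*_m (s, z) by less than the
   bonus. As V*_m is deterministic, the partial sums of P V*_m (s, z) - V*_m y
   over the successive visits give an exponential supermartingale along the run,
   whatever the policy and the initial states, so each such failure has
   probability at most exp (- L) = delta / (5 S H K Z T); a union bound over the
   S Z H T possible failures gives delta. *)

Section RealFacts.
Variable R : realType.

Lemma expR_le_quad (x : R) : x <= 1/2 -> expR x <= 1 + x + 2 * x ^+ 2.
Proof.
move=> x_le.
have x_lt1 : 0 < 1 - x by lra.
have inv_bound : (1 - x)^-1 <= 1 + x + 2 * x ^+ 2.
  rewrite -div1r ler_pdivrMr // -subr_ge0.
  have -> : (1 + x + 2 * x ^+ 2) * (1 - x) - 1 = x ^+ 2 * (1 - 2 * x) by ring.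
  by rewrite mulr_ge0 ?sqr_ge0 //; lra.
apply: le_trans inv_bound; rewrite -div1r ler_pdivlMr //.
have : 1 - x <= expR (- x) by have := expR_ge1Dx (- x); lra.
by rewrite -(ler_pM2l (expR_gt0 x)) expRxMexpNx_1 mulrC.
Qed.

Lemma half_lt_ln (x : R) : 5 <= x -> 1/2 < ln x.
Proof.
move=> x_ge5; rewrite ltNge; apply/negP => ln_le.
have x_pos : 0 < x by lra.
have : x <= expR (1/2) by rewrite -(lnK (x := x)) ?posrE // ler_expR.
have := expR_le_quad (lexx (1/2 : R)); rewrite expr2; lra.
Qed.

Lemma mgf_centered_le (T : finType) (t d : T -> R) (c lam : R) :
  (forall y, 0 <= t y) -> \sum_y t y = 1 -> \sum_y t y * d y = 0 ->
  (forall y, - c <= d y <= c) -> 0 <= lam -> lam * c <= 1/2 ->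
  \sum_y t y * expR (lam * d y) <= expR (2 * lam ^+ 2 * c ^+ 2).
Proof.
move=> t_ge0 t_sum1 t_mean0 d_bd lam_ge0 lamc.
apply: le_trans (_ : \sum_y t y * (1 + lam * d y + 2 * (lam ^+ 2 * c ^+ 2)) <= _).
  apply: ler_sum => y _; apply: ler_wpM2l => //.
  have /andP[dlo dhi] := d_bd y.
  have : lam * d y <= lam * c by rewrite ler_wpM2l.
  move=> ld; apply: le_trans (expR_le_quad _) _; first lra.
  rewrite lerD2l ler_wpM2l // exprMn ler_wpM2l ?sqr_ge0 // !expr2; nra.
under eq_bigr do rewrite mulrDr mulrDr mulr1 mulrCA.
rewrite !big_split /= -!mulr_sumr -mulr_suml t_mean0 t_sum1 mulr0 addr0 mul1r.
by rewrite mulrA; exact: expR_ge1Dx.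
Qed.

Lemma sum_seq_count (T : finType) (l : seq T) (F : T -> R) :
  \sum_(y <- l) F y = \sum_y (count_mem y l)%:R * F y.
Proof.
rewrite (partition_big id predT) //=; apply: eq_big => // y _.
rewrite (eq_bigr (fun => F y)); last by move=> x /eqP ->.
by rewrite big_const_seq iter_addr_0 mulr_natl.
Qed.

End RealFacts.

Lemma sumn_count_mem (T : finType) (l : seq T) : (\sum_y count_mem y l)%N = size l.
Proof.
rewrite -sum1_size [RHS](partition_big id predT) //=.
by apply: eq_bigr => y _; rewrite sum1_count.
Qed.

Lemma big_tuple_cons (R : nmodType) (T : finType) n (F : n.+1.-tuple T -> R) :
  \sum_(t : n.+1.-tuple T) F t = \sum_(x : T) \sum_(t : n.-tuple T) F [tuple of x :: t].
Proof.
rewrite pair_big /= (reindex (fun p : T * n.-tuple T => [tuple of p.1 :: p.2])) //=.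
exists (fun t : n.+1.-tuple T => (thead t, [tuple of behead t])).
  by move=> [x t] _ /=; congr pair; apply: val_inj.
by move=> [[|x t] //= ?] _; apply: val_inj.
Qed.

Section Run.
Variables (R : realType) (S A Z : finType) (M : cmdp R S A Z) (H K : nat).
Variables (delta : R) (init : seq (tup S A Z) -> S) (tb : (A -> R) -> A).

Local Notation data := (seq (tup S A Z)).
Local Notation run_step := (step M H K delta init tb).

Definition expect (st : data * S * R) (n : nat) (G : data -> R) : R :=
  \sum_(om : n.-tuple (Z * S)) (foldl run_step st om).2 * G (foldl run_step st om).1.1.

Definition state_at (D : data) (cur : S) : S :=
  if (size D %% H == 0)%N then init D else cur.
Definition action_at (D : data) (cur : S) : A :=
  tb (Qhat M H K delta (take (size D %/ H * H) D) (size D %% H).+1 (state_at D cur)).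

Lemma stepE D cur w (o : Z * S) :
  run_step (D, cur, w) o =
  (rcons D (state_at D cur, action_at D cur, o.1, o.2), o.2,
   w * pz M (state_at D cur) (action_at D cur) o.1 *
   trans M (state_at D cur) o.1 o.2).
Proof. by case: o. Qed.

Lemma expect_0 D cur w G : expect (D, cur, w) 0 G = w * G D.
Proof. by rewrite /expect (big_pred1 [tuple]) // => t; apply/esym/eqP/tuple0. Qed.

Lemma expectS st n G :
  expect st n.+1 G = \sum_(o : Z * S) expect (run_step st o) n G.
Proof. by rewrite /expect big_tuple_cons. Qed.

Hypothesis M_valid : valid_cmdp M.

Lemma sum_pz_trans s a : \sum_(o : Z * S) pz M s a o.1 * trans M s o.1 o.2 = 1.
Proof.
case: M_valid => _ trans1 _ pz1 _.
rewrite -(pair_big predT predT (fun z s' => pz M s a z * trans M s z s')) /=.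
by rewrite -(pz1 s a); apply: eq_bigr => z _; rewrite -mulr_sumr trans1 mulr1.
Qed.

Lemma run_weight_ge0 (om : seq (Z * S)) st : 0 <= st.2 -> 0 <= (foldl run_step st om).2.
Proof.
case: M_valid => trans0 _ pz0 _ _.
elim: om st => [|o om IH] [[D cur] w] w_ge0 //.
by apply: IH; rewrite stepE /= !mulr_ge0.
Qed.

Lemma expect_cst n D cur w c : expect (D, cur, w) n (fun => c) = w * c.
Proof.
elim: n D cur w => [|n IH] D cur w; first exact: expect_0.
rewrite expectS; under eq_bigr do rewrite stepE IH -!mulrA.
rewrite -mulr_sumr; under eq_bigr do rewrite mulrA.
by rewrite -mulr_suml sum_pz_trans mul1r.
Qed.

(* Quantifying over the current state and action makes the bound independent of
   the policy and of the adaptively chosen initial states. *)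
Definition supermartingale (G : data -> R) : Prop :=
  forall D s a, \sum_(o : Z * S) pz M s a o.1 * trans M s o.1 o.2 *
                  G (rcons D (s, a, o.1, o.2)) <= G D.

Lemma supermartingale_of_trans (G : data -> R) :
  (forall D s a z, \sum_s' trans M s z s' * G (rcons D (s, a, z, s')) <= G D) ->
  supermartingale G.
Proof.
case: M_valid => _ _ pz0 pz1 _ G_trans D s a.
rewrite -(pair_big predT predT
  (fun z s' => pz M s a z * trans M s z s' * G (rcons D (s, a, z, s')))) /=.
apply: le_trans (_ : \sum_z pz M s a z * G D <= _); last first.
  by rewrite -mulr_suml pz1 mul1r.
apply: ler_sum => z _; under eq_bigr do rewrite -mulrA.
by rewrite -mulr_sumr ler_wpM2l.
Qed.

Lemma expect_supermartingale G n D cur w :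
  supermartingale G -> 0 <= w -> expect (D, cur, w) n G <= w * G D.
Proof.
case: M_valid => trans0 _ pz0 _ _ G_super.
elim: n D cur w => [|n IH] D cur w w_ge0; first by rewrite expect_0.
rewrite expectS; under eq_bigr do rewrite stepE.
apply: le_trans (_ : \sum_(o : Z * S) w * (pz M (state_at D cur) (action_at D cur) o.1 *
    trans M (state_at D cur) o.1 o.2 *
    G (rcons D (state_at D cur, action_at D cur, o.1, o.2))) <= _).
  by apply: ler_sum => o _; rewrite !mulrA IH // !mulr_ge0.
by rewrite -mulr_sumr ler_wpM2l.
Qed.

Lemma ler_expect D cur w n (G1 G2 : data -> R) : 0 <= w ->
  (forall D', G1 D' <= G2 D') -> expect (D, cur, w) n G1 <= expect (D, cur, w) n G2.
Proof.
move=> w_ge0 G12; apply: ler_sum => om _.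
by rewrite ler_wpM2l ?run_weight_ge0.
Qed.

Lemma expect_ge0 D cur w n (G : data -> R) :
  0 <= w -> (forall D', 0 <= G D') -> 0 <= expect (D, cur, w) n G.
Proof. by move=> w_ge0 G_ge0; apply: sumr_ge0 => om _; rewrite mulr_ge0 ?run_weight_ge0. Qed.

Lemma expectD st n (G1 G2 : data -> R) :
  expect st n (fun D => G1 D + G2 D) = expect st n G1 + expect st n G2.
Proof. by rewrite -big_split; apply: eq_bigr => om _; rewrite mulrDr. Qed.

Lemma expect_sum (I : finType) st n (F : I -> data -> R) :
  expect st n (fun D => \sum_i F i D) = \sum_i expect st n (F i).
Proof. by rewrite exchange_big; apply: eq_bigr => om _; rewrite mulr_sumr. Qed.

Lemma expectZ st n c (G : data -> R) :
  expect st n (fun D => c * G D) = c * expect st n G.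
Proof. by rewrite mulr_sumr; apply: eq_bigr => om _; rewrite mulrCA. Qed.

Definition samples (s : S) (z : Z) (D : data) : seq S :=
  [seq x.2 | x <- D & (x.1.1.1 == s) && (x.1.2 == z)].

Definition PV (s : S) (z : Z) (V : S -> R) : R := \sum_y trans M s z y * V y.

Lemma samples_rcons s z D s1 a z1 y :
  samples s z (rcons D (s1, a, z1, y)) =
  if (s1 == s) && (z1 == z) then rcons (samples s z D) y else samples s z D.
Proof. by rewrite /samples filter_rcons /=; case: ifP => //; rewrite map_rcons. Qed.

Lemma samples_cat s z (D1 D2 : data) :
  samples s z (D1 ++ D2) = samples s z D1 ++ samples s z D2.
Proof. by rewrite /samples filter_cat map_cat. Qed.

Lemma size_samples_le s z D : (size (samples s z D) <= size D)%N.
Proof. by rewrite size_map size_filter count_size. Qed.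

Lemma PV_bd s z (V : S -> R) c : (forall y, 0 <= V y <= c) -> 0 <= PV s z V <= c.
Proof.
case: M_valid => trans0 trans1 _ _ _ V_bd.
apply/andP; split.
  by apply: sumr_ge0 => y _; rewrite mulr_ge0 //; case/andP: (V_bd y).
apply: le_trans (_ : \sum_y trans M s z y * c <= _).
  by apply: ler_sum => y _; rewrite ler_wpM2l //; case/andP: (V_bd y).
by rewrite -mulr_suml trans1 mul1r.
Qed.

Section Deviation.

Variables (s0 : S) (z0 : Z) (V : S -> R) (c : R) (N : nat).
Hypothesis V_bd : forall y, 0 <= V y <= c.

Definition dev (D : data) : R := \sum_(y <- take N (samples s0 z0 D)) (PV s0 z0 V - V y).

Definition expdev (lam : R) (D : data) : R :=
  expR (lam * dev D - 2 * lam ^+ 2 * c ^+ 2 * (size (take N (samples s0 z0 D)))%:R).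

Definition large_dev (th : R) (D : data) : bool :=
  (N <= size (samples s0 z0 D))%N && (th <= dev D).

(* Each of the first [N] samples [y] of [(s0, z0)] multiplies [expdev] by
   [expR (lam * (PV - V y) - 2 * lam ^+ 2 * c ^+ 2)], whose conditional mean is at
   most 1; every other step leaves it unchanged. *)
Lemma expdev_trans (lam : R) D s a z : 0 <= lam -> lam * c <= 1/2 ->
  \sum_s' trans M s z s' * expdev lam (rcons D (s, a, z, s')) <= expdev lam D.
Proof.
move=> lam_ge0 lamc; case: (M_valid) => trans0 trans1 _ _ _.
have [fresh|stale] := boolP [&& s == s0, z == z0 & (size (samples s0 z0 D) < N)%N]; last first.
  rewrite (eq_bigr (fun s' => trans M s z s' * expdev lam D)).
    by rewrite -mulr_suml trans1 mul1r.
  move=> s' _; congr (_ * _); rewrite /expdev /dev samples_rcons.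
  case: ifP => // /andP[/eqP s_eq /eqP z_eq].
  move: stale; rewrite s_eq z_eq !eqxx /= -leqNgt => full.
  by rewrite -cats1 takel_cat.
case/and3P: fresh => /eqP -> /eqP -> short.
have take_new s' : take N (samples s0 z0 (rcons D (s0, a, z0, s'))) =
                   rcons (samples s0 z0 D) s'.
  by rewrite samples_rcons !eqxx take_oversize // size_rcons.
have take_old : take N (samples s0 z0 D) = samples s0 z0 D.
  by rewrite take_oversize // ltnW.
rewrite (eq_bigr (fun s' => expdev lam D * expR (- (2 * lam ^+ 2 * c ^+ 2)) *
      (trans M s0 z0 s' * expR (lam * (PV s0 z0 V - V s'))))); last first.
  move=> s' _; rewrite /expdev /dev take_new take_old size_rcons big_rcons /= -!expRD.
  rewrite [RHS]mulrCA -expRD; congr (_ * expR _).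
  by rewrite -addn1 natrD; ring.
rewrite -mulr_sumr -[X in _ <= X]mulr1 -mulrA ler_pM2l ?expR_gt0 //.
have mgf : \sum_y trans M s0 z0 y * expR (lam * (PV s0 z0 V - V y)) <=
           expR (2 * lam ^+ 2 * c ^+ 2).
  apply: mgf_centered_le => //.
    under eq_bigr do rewrite mulrBr.
    by rewrite sumrB -mulr_suml trans1 mul1r; apply: subrr.
  by move=> y; have /andP[? ?] := V_bd y; have /andP[? ?] := PV_bd s0 z0 V_bd; apply/andP; split; lra.
apply: le_trans (ler_wpM2l (expR_ge0 _) mgf) _.
by rewrite mulrC expRxMexpNx_1.
Qed.

Lemma large_dev_expect_le (lam th : R) n : 0 <= lam -> lam * c <= 1/2 ->
  expect ([::], init [::], 1) n (fun D => (large_dev th D)%:R)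
  <= expR (2 * lam ^+ 2 * c ^+ 2 * N%:R - lam * th).
Proof.
move=> lam_ge0 lamc.
set b := expR _.
have markov D : (large_dev th D)%:R <= b * expdev lam D.
  case/boolP: (large_dev th D) => [/andP[enough th_le]|_]; last first.
    by rewrite mulr_ge0 ?expR_ge0.
  rewrite /b /expdev size_takel // -expRD -expR0 ler_expR.
  have : lam * th <= lam * dev D by rewrite ler_wpM2l.
  lra.
apply: le_trans (ler_expect _ _ _ ler01 markov) _.
rewrite expectZ -[X in _ <= X]mulr1 ler_wpM2l ?expR_ge0 //.
apply: le_trans (expect_supermartingale _ _ _ _ _) _ => //.
  by apply: supermartingale_of_trans => *; apply: expdev_trans.
by rewrite /expdev /dev /= big_nil mulr0 mul1r mulr0 subr0 expR0.
Qed.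

End Deviation.

End Run.

Section Values.
Variables (R : realType) (S A Z : finType) (M : cmdp R S A Z) (H K : nat) (delta : R).
Hypothesis M_valid : valid_cmdp M.
Variable a0 : A.

Local Notation data := (seq (tup S A Z)).

Lemma Psa_ge0 s a s' : 0 <= Psa M s a s'.
Proof. by case: M_valid => trans0 _ pz0 _ _; apply: sumr_ge0 => z _; rewrite mulr_ge0. Qed.

Lemma Psa_sum s a : \sum_s' Psa M s a s' = 1.
Proof.
case: M_valid => _ trans1 _ pz1 _.
rewrite /Psa exchange_big /= -(pz1 s a); apply: eq_bigr => z _.
by rewrite -mulr_suml trans1 mul1r.
Qed.

Lemma Rsa_bd s a : 0 <= Rsa M s a <= 1.
Proof.
case: M_valid => _ _ pz0 pz1 rew_bd.
apply/andP; split.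
  by apply: sumr_ge0 => z _; rewrite mulr_ge0 //; case/andP: (rew_bd s z).
rewrite -(pz1 s a); apply: ler_sum => z _.
by rewrite ler_piMl //; case/andP: (rew_bd s z).
Qed.

Lemma Vpi_bd pi m s : 0 <= Vpi M H pi m s <= m%:R.
Proof.
elim: m s => [|m IH] s /=; first by rewrite lexx.
set a := pi s (H - m)%N; have /andP[r_ge0 r_le1] := Rsa_bd s a.
have P_ge0 y : 0 <= Psa M s a y * Vpi M H pi m y.
  by rewrite mulr_ge0 ?Psa_ge0 //; case/andP: (IH y).
apply/andP; split; first by rewrite addr_ge0 // sumr_ge0.
rewrite -addn1 natrD addrC lerD //.
apply: le_trans (_ : \sum_y Psa M s a y * m%:R <= _).
  by apply: ler_sum => y _; rewrite ler_wpM2l ?Psa_ge0 //; case/andP: (IH y).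
by rewrite -mulr_suml Psa_sum mul1r.
Qed.

(* The optimal value with [m] steps to go: [Vstar h] is [Vsup (H.+1 - h)]. *)
Definition Vsup (m : nat) (s : S) : R := sup (range (fun pi => Vpi M H pi m s)).

Let pi0 : S -> nat -> A := fun _ _ => a0.

Lemma Vsup_has_sup m s : has_sup (range (fun pi => Vpi M H pi m s)).
Proof.
split; first by exists (Vpi M H pi0 m s), pi0.
by exists m%:R => x [pi _ <-]; case/andP: (Vpi_bd pi m s).
Qed.

Lemma Vpi_le_Vsup pi m s : Vpi M H pi m s <= Vsup m s.
Proof. by apply: sup_upper_bound (Vsup_has_sup m s) _ _; exists pi. Qed.

Lemma Vsup_bd m s : 0 <= Vsup m s <= m%:R.
Proof.
apply/andP; split.
  by apply: le_trans (Vpi_le_Vsup pi0 m s); case/andP: (Vpi_bd pi0 m s).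
apply: ge_sup; first by exists (Vpi M H pi0 m s), pi0.
by move=> x [pi _ <-]; case/andP: (Vpi_bd pi m s).
Qed.

Lemma bellman_split s a (W : S -> R) :
  Rsa M s a + \sum_s' Psa M s a s' * W s' =
  \sum_z pz M s a z * (rew M s z + PV M s z W).
Proof.
under [X in _ + X]eq_bigr do rewrite /Psa mulr_suml.
rewrite /Rsa exchange_big /= -big_split /=; apply: eq_bigr => z _.
rewrite mulrDr mulr_sumr mulrC; congr (_ + _); apply: eq_bigr => y _; ring.
Qed.

Lemma Qof_le_H D Vn s a : Qof M H K delta D Vn s a <= H%:R.
Proof.
case: M_valid => _ _ pz0 pz1 _.
have qhat_le z : qhat M H K delta D Vn s z <= H%:R.
  by rewrite /qhat; case: ifP => // _; rewrite ge_min lexx.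
apply: le_trans (_ : \sum_z pz M s a z * H%:R <= _).
  by apply: ler_sum => z _; rewrite ler_wpM2l.
by rewrite -mulr_suml pz1 mul1r.
Qed.

(* The confidence event for the data [D] of the earlier episodes; when
   [bonus >= H], the clipping of [qhat] at [H] makes concentration unnecessary. *)
Definition concentrated (D : data) : Prop :=
  forall s z m, (m < H)%N -> (0 < N2 D s z)%N -> bonus H K delta D s z < H%:R ->
  PV M s z (Vsup m) - \sum_y Phat R D y s z * Vsup m y < bonus H K delta D s z.

Lemma qhat_optimistic D (Vn : S -> R) s z m : concentrated D -> (m < H)%N ->
  (forall y, Vsup m y <= Vn y) ->
  rew M s z + PV M s z (Vsup m) <= qhat M H K delta D Vn s z.
Proof.
move=> conc m_lt V_le.
case: M_valid => _ _ _ _ /(_ s z)/andP[r_ge0 r_le1].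
have /andP[PV_ge0 PV_le] := PV_bd M_valid s z (Vsup_bd m).
have mH : m%:R + 1 <= H%:R :> R by rewrite natr1 ler_nat.
rewrite /qhat; case: ifP => [N_gt0|_]; last lra.
rewrite le_min; apply/andP; split; first lra.
have Phat_le : \sum_y Phat R D y s z * Vsup m y <= \sum_y Phat R D y s z * Vn y.
  by apply: ler_sum => y _; rewrite ler_wpM2l ?divr_ge0.
have Phat_ge0 : 0 <= \sum_y Phat R D y s z * Vsup m y.
  by apply: sumr_ge0 => y _; rewrite mulr_ge0 ?divr_ge0 //; case/andP: (Vsup_bd m y).
have [|bonus_lt] := lerP H%:R (bonus H K delta D s z); first lra.
by have := conc s z m m_lt N_gt0 bonus_lt; lra.
Qed.

Lemma Vsup_le_Vrem D : concentrated D ->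
  forall m, (m <= H)%N -> forall s, Vsup m s <= Vrem M H K delta D m s.
Proof.
move=> conc; elim=> [|m IH] m_le s; first by case/andP: (Vsup_bd 0 s).
case: M_valid => _ _ pz0 _ _.
apply: ge_sup; first by exists (Vpi M H pi0 m.+1 s), pi0.
move=> _ [pi _ <-] /=; set a := pi s (H - m)%N.
apply: le_trans (_ : Rsa M s a + \sum_s' Psa M s a s' * Vsup m s' <= _).
  by rewrite lerD2l; apply: ler_sum => y _; rewrite ler_wpM2l ?Psa_ge0 ?Vpi_le_Vsup.
rewrite bellman_split.
apply: le_trans (_ : Qof M H K delta D (Vrem M H K delta D m) s a <= _).
  apply: ler_sum => z _; rewrite ler_wpM2l //.
  exact: qhat_optimistic conc m_le (IH (ltnW m_le)).
apply: ub_le_sup; last by exists a.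
by exists H%:R => _ [b _ <-]; apply: Qof_le_H.
Qed.

End Values.

Section Confidence.
Variables (R : realType) (S A Z : finType) (M : cmdp R S A Z) (H K : nat).
Variables (delta : R) (init : seq (tup S A Z) -> S) (tb : (A -> R) -> A).
Hypothesis M_valid : valid_cmdp M.

Local Notation data := (seq (tup S A Z)).
Local Notation L := (Lconf S Z H K delta).
Local Notation Erun := (expect M H K delta init tb ([::], init [::], 1)).

Definition bonusN (N : nat) : R := 7 * H%:R * L * Num.sqrt (#|S|%:R / N%:R).

Definition bad_index := (S * Z * 'I_H * 'I_(Tn H K))%type.

(* The index [j] stands for [j.+1] visits of [(s, z)]. *)
Definition bad (i : bad_index) (D : data) : bool :=
  let: (s, z, m, j) := i in
  (bonusN j.+1 < H%:R) &&
  large_dev M s z (Vsup M H m) j.+1 (j.+1%:R * bonusN j.+1) D.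

Lemma N3_count (D : data) s z y : N3 D s z y = count_mem y (samples s z D).
Proof.
rewrite /N3 /samples count_map count_filter; apply: eq_count => x /=.
by rewrite /preim /=; case: (x.2 == y); rewrite ?andbT ?andbF.
Qed.

Lemma N2_size (D : data) s z : N2 D s z = size (samples s z D).
Proof.
rewrite /N2 -sumn_count_mem; apply: eq_big => // y _; exact: N3_count.
Qed.

Lemma dev_prefix (D1 D2 : data) s z (W : S -> R) : (0 < N2 D1 s z)%N ->
  dev M s z W (N2 D1 s z) (D1 ++ D2) =
  (N2 D1 s z)%:R * (PV M s z W - \sum_y Phat R D1 y s z * W y).
Proof.
rewrite N2_size => N_gt0.
rewrite /dev samples_cat take_size_cat // sum_seq_count mulrBr.
under eq_bigr do rewrite mulrBr.
rewrite sumrB -mulr_suml -natr_sum sumn_count_mem; congr (_ - _).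
rewrite mulr_sumr; apply: eq_bigr => y _; rewrite /Phat N3_count N2_size mulrA mulrCA.
by rewrite divff ?mulr1 // gt_eqF ?ltr0n.
Qed.

Lemma concentrated_of_no_bad (D : data) k : (k < K)%N ->
  (forall i, ~~ bad i D) -> concentrated M H K delta (take (k * H) D).
Proof.
move=> k_lt no_bad s z m m_lt N_gt0 bonus_lt.
set D1 := take (k * H) D; set N := N2 D1 s z.
have N_le : (N.-1 < Tn H K)%N.
  rewrite prednK // /N N2_size (leq_trans (size_samples_le _ _ _)) //.
  by rewrite size_take_min (leq_trans (geq_minl _ _)) // leq_mul2r ltnW ?orbT.
have := no_bad (s, z, Ordinal m_lt, Ordinal N_le).
rewrite /bad prednK // bonus_lt /= /large_dev negb_and -ltNge.
rewrite -(cat_take_drop (k * H) D) -/D1 samples_cat size_cat -N2_size leq_addr /=.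
by rewrite dev_prefix // ltr_pM2l ?ltr0n.
Qed.

Lemma eventE_of_no_bad (D : data) : (forall i, ~~ bad i D) -> eventE M H K delta D.
Proof.
move=> no_bad; apply/forallP => k; apply/forallP => h; apply/forallP => s.
rewrite /Vstar /Vhat /Vpi_h subSS.
apply: Vsup_le_Vrem (leq_subr h H) s => //; first exact: tb (fun => 0).
exact: concentrated_of_no_bad (ltn_ord k) no_bad.
Qed.

Lemma expect_eventE_ge n :
  1 - \sum_i Erun n (fun D => (bad i D)%:R) <= Erun n (fun D => (eventE M H K delta D)%:R).
Proof.
have cover D : 1 <= (eventE M H K delta D)%:R + \sum_i (bad i D)%:R :> R.
  case E: (eventE M H K delta D); first by rewrite lerDl sumr_ge0.
  case: (pickP (bad^~ D)) => [i bad_i|no_bad]; last first.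
    by move: E; rewrite eventE_of_no_bad // => i; rewrite no_bad.
  by rewrite add0r (bigD1 i) //= bad_i lerDl sumr_ge0.
have split_sum : Erun n (fun D => (eventE M H K delta D)%:R + \sum_i (bad i D)%:R) =
    Erun n (fun D => (eventE M H K delta D)%:R) + \sum_i Erun n (fun D => (bad i D)%:R).
  by rewrite -expect_sum -expectD.
suff : Erun n (fun => 1) <=
       Erun n (fun D => (eventE M H K delta D)%:R + \sum_i (bad i D)%:R).
  by rewrite expect_cst // split_sum mul1r; lra.
by apply: ler_expect => //; apply: ler01.
Qed.

(* [lam] minimizes the Chernoff exponent, which becomes [- N.+1 * b ^+ 2 / (8 * H ^+ 2)]. *)
Lemma chernoff_exponent_le N (b := bonusN N.+1) (lam := b / (4 * H%:R ^+ 2)) :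
  0 < H%:R :> R -> 1 <= #|S|%:R :> R -> 1/2 < L ->
  2 * lam ^+ 2 * H%:R ^+ 2 * N.+1%:R - lam * (N.+1%:R * b) <= - L.
Proof.
move=> H_gt0 S_ge1 L_gt.
have Nr_gt0 : 0 < N.+1%:R :> R by rewrite ltr0n.
have b2 : N.+1%:R * b ^+ 2 = 49 * H%:R ^+ 2 * L ^+ 2 * #|S|%:R.
  rewrite /b /bonusN !exprMn sqr_sqrtr ?divr_ge0 //.
  by field; rewrite nat1r pnatr_eq0.
have -> : 2 * lam ^+ 2 * H%:R ^+ 2 * N.+1%:R - lam * (N.+1%:R * b) =
          - (N.+1%:R * b ^+ 2) / (8 * H%:R ^+ 2).
  by rewrite /lam; field; rewrite gt_eqF.
rewrite b2 (_ : _ / _ = - (L * (49 * L * #|S|%:R)) / 8); last by field; rewrite gt_eqF.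
rewrite ler_pdivrMr // mulNr lerN2.
have : 8 <= 49 * L * #|S|%:R by nra.
nra.
Qed.

Lemma bad_expect_le (i : bad_index) n : 1/2 < L ->
  Erun n (fun D => (bad i D)%:R) <= expR (- L).
Proof.
case: i => [[[s z] m] j] L_gt /=.
have [bonus_lt|_] := ltP (bonusN j.+1) H%:R; last first.
  apply: le_trans (_ : Erun n (fun => 0) <= _).
    by apply: ler_expect => // D; rewrite mulr0.
  by rewrite expect_cst // mulr0 expR_ge0.
have H_gt0 : 0 < H%:R :> R by case: m => m /= m_lt; rewrite ltr0n (leq_ltn_trans _ m_lt).
have S_ge1 : 1 <= #|S|%:R :> R by rewrite ler1n; apply/card_gt0P; exists s.
set b := bonusN j.+1 in bonus_lt *.
have b_ge0 : 0 <= b by rewrite !mulr_ge0 ?sqrtr_ge0 //; lra.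
set lam := b / (4 * H%:R ^+ 2).
have lam_ge0 : 0 <= lam by rewrite divr_ge0 // mulr_ge0 // sqr_ge0.
have lamH : lam * H%:R <= 1/2.
  have -> : lam * H%:R = b / (4 * H%:R) by rewrite /lam; field; rewrite gt_eqF.
  by rewrite ler_pdivrMr ?mulr_gt0 //; lra.
have V_bd y : 0 <= Vsup M H m y <= H%:R.
  have /andP[-> le_m] := Vsup_bd H M_valid (tb (fun => 0)) m y.
  by rewrite (le_trans le_m) // ler_nat ltnW.
apply: le_trans (large_dev_expect_le H K delta init tb M_valid s z j.+1 V_bd _ n lam_ge0 lamH) _.
by rewrite ler_expR; exact: chernoff_exponent_le.
Qed.

Lemma sum_bad_expect_le n : 0 < delta < 1 ->
  \sum_(i : bad_index) Erun n (fun D => (bad i D)%:R) <= delta.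
Proof.
case/andP=> delta_gt0 delta_lt1.
case: (pickP (@predT bad_index)) => [[[[s z] h] j] _|no_index]; last first.
  by rewrite big_pred0 // ltW.
have Tn_gt0 : (0 < Tn H K)%N by case: j => j /= /(leq_ltn_trans (leq0n j)).
have Z_gt0 : (0 < #|Z|)%N by apply/card_gt0P; exists z.
have S_gt0 : (0 < #|S|)%N by apply/card_gt0P; exists s.
set N0 := (5 * #|S| * H * K * #|Z| * Tn H K)%N.
have /andP[K_gt0 H_gt0] : (0 < K)%N && (0 < H)%N by rewrite -muln_gt0.
have N0_ge5 : (5 <= N0)%N.
  by rewrite /N0 -!mulnA leq_pmulr // !muln_gt0 S_gt0 H_gt0 K_gt0 Z_gt0.
have N0_gt0 : 0 < N0%:R :> R by rewrite ltr0n (leq_trans _ N0_ge5).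
have card_le : (#|{: bad_index}| <= N0)%N.
  rewrite !card_prod !card_ord /N0; nia.
have expNL : expR (- L) = delta / N0%:R.
  by rewrite expRN lnK ?posrE ?divr_gt0 // invf_div.
have L_gt : 1/2 < L.
  apply: half_lt_ln; rewrite ler_pdivlMr // -/N0.
  have : 5 <= N0%:R :> R by rewrite ler_nat.
  lra.
apply: le_trans (_ : \sum_(i : bad_index) expR (- L) <= _).
  by apply: ler_sum => i _; exact: bad_expect_le.
rewrite sumr_const expNL -[delta / _ *+ _]mulr_natr mulrAC ler_pdivrMr //.
by rewrite ler_wpM2l ?ler_nat // ltW.
Qed.

Lemma probE_expect :
  probE M H K delta init tb = Erun (Tn H K) (fun D => (eventE M H K delta D)%:R).
Proof. by apply: eq_bigr => om _; rewrite /run; case: foldl => [[D cur] w]. Qed.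

End Confidence.

Unset Implicit Arguments.
Set Strict Implicit.

Theorem lemma1 (R : realType) (S A Z : finType) (M : cmdp R S A Z) (H K : nat)
  (delta : R) (init : seq (tup S A Z) -> S) (tb : (A -> R) -> A) :
  valid_cmdp M ->
  (forall (f : A -> R) (a : A), f a <= f (tb f)) ->
  0 < delta ->
  1 - delta <= probE M H K delta init tb.
Proof.
move=> M_valid _ delta_gt0; rewrite probE_expect.
have [delta_ge1|delta_lt1] := lerP 1 delta.
  apply: le_trans (_ : 0 <= _); first lra.
  by apply: expect_ge0 => // D; exact: ler0n.
apply: le_trans (expect_eventE_ge _ _ _ _ _ M_valid _); rewrite lerD2l lerN2.
by apply: sum_bad_expect_le => //; rewrite delta_gt0.
Qed.
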